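(* Let $\mathcal K$ be a 2-category which admits Eilenberg–Moore constructions for both monads and comonads and in which idempotent 2-cells split. Let $(t,\mu,\eta)$ be a monad and $(c,\delta,\varepsilon)$ a comonad on a 0-cell $k$, and $\psi:tc\Rightarrow ct$ a 2-cell. The following are equivalent: (i) $(t,c,\psi)$ is a weak entwining structure, i.e. $\psi\ast\mu c=c\mu\ast\psi t\ast t\psi$, $\delta t\ast\psi=c\psi\ast\psi c\ast t\delta$, $\psi\ast\eta c=c\varepsilon t\ast c\psi\ast c\eta c\ast\delta$ and $\varepsilon t\ast\psi=\mu\ast t\varepsilon t\ast t\psi\ast t\eta c$; (ii) $\psi$ induces both a weak $\iota$-lifting of the comonad $c$ for the monad $t$ and a weak $\pi$-lifting of the monad $t$ for the comonad $c$; that is, both of the following hold: (A) $c\mu\ast\psi t\ast t\psi=\psi\ast\mu c$, $\delta t\ast\psi=cc\mu\ast c\psi t\ast\psi ct\ast t\delta t\ast t\psi\ast t\eta c$ and $\varepsilon t\ast\psi=\mu\ast t\varepsilon t\ast t\psi\ast t\eta c$ (i.e. $((c,\psi),\delta,\varepsilon)$ is a comonad in $\mathrm{Mnd}^\iota(\mathcal K)$); (B) $\delta t\ast\psi=c\psi\ast\psi c\ast t\delta$, $\psi\ast\mu c=c\varepsilon t\ast c\psi\ast c\mu c\ast\psi tc\ast t\psi c\ast tt\delta$ and $\psi\ast\eta c=c\varepsilon t\ast c\psi\ast c\eta c\ast\delta$ (i.e. $((t,\psi),\mu,\eta)$ is a monad in the vertical opposite of $\mathrm{Mnd}^\iota$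 of the vertically-opposite 2-category $\mathcal K_*$).
   Context: Conventions in a 2-category $\mathcal K$: horizontal composition and whiskering by juxtaposition in the order of functor composition; identity 1-cell of $k$ written $k$, identity 2-cell of $V$ written $V$; vertical composition $\ast$ with $\alpha\ast\beta$ meaning $\beta$ then $\alpha$. Monad $(t,\mu,\eta)$: $\mu:tt\Rightarrow t$, $\eta:k\Rightarrow t$ associative and unital. Comonad $(c,\delta,\varepsilon)$: $\delta:c\Rightarrow cc$, $\varepsilon:c\Rightarrow k$, coassociative and counital. $\mathcal K$ admitting Eilenberg–Moore constructions for monads (resp. comonads) means the inclusion of $\mathcal K$ into the Lack–Street 2-category of monads (resp. of comonads) has a right 2-adjoint; idempotent 2-cells split means every idempotent 2-cell factors as $\iota\ast\pi$ with $\pi\ast\iota$ an identity. $\mathrm{Mnd}^\iota(\mathcal K)$: 0-cells monads; 1-cells $(V,\psi):t\to t'$ with $\psi:t'V\Rightarrow Vt$, $V\mu\ast\psi t\ast t'\psi=\psi\ast\mu'V$; 2-cells $\omega:(V,\psi)\Rightarrow(W,\phi)$ are $\omega:V\Rightarrow W$ with $\omega t\ast\psi=W\mu\ast\phi t\ast t'\omega t\ast t'\psi\ast t'\eta'V$; compositions as in $\mathcal K$, 1-cell composite $(V'V,V'\psi\ast\psi'V)$. *)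

Definition tr2 {H : Type} (C : H -> H -> Type) {f f' g g' : H}
  (ef : f = f') (eg : g = g') (x : C f g) : C f' g' :=
  match ef in _ = f1, eg in _ = g1 return C f1 g1 with eq_refl, eq_refl => x end.

Record TwoCatData := {
  ob : Type;
  hom : ob -> ob -> Type;
  cell : forall a b, hom a b -> hom a b -> Type;
  id1 : forall a, hom a a;
  (* comp1 g f = "g f" : first f then g (order of functor composition) *)
  comp1 : forall a b c, hom b c -> hom a b -> hom a c;
  id2 : forall a b (f : hom a b), cell a b f f;
  (* vcomp α β = α * β : first β, then α *)
  vcomp : forall a b (f g h : hom a b), cell a b g h -> cell a b f g -> cell a b f h;
  hcomp : forall a b c (f f' : hom b c) (g g' : hom a b),
      cell b c f f' -> cell a b g g' -> cell a c (comp1 a b c f g) (comp1 a b c f' g') }.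

Arguments hom {_} _ _.
Arguments cell {_ _ _} _ _.
Arguments id1 {_} _.
Arguments comp1 {_ _ _ _} _ _.
Arguments id2 {_ _ _} _.
Arguments vcomp {_ _ _ _ _ _} _ _.
Arguments hcomp {_ _ _ _ _ _ _ _} _ _.

Notation "g ⊚ f" := (comp1 g f) (at level 39, right associativity).
Notation "α ⋆ β" := (vcomp α β) (at level 51, right associativity).

Record IsTwoCat (D : TwoCatData) : Prop := {
  comp1A : forall (a b c d : ob D) (f : hom c d) (g : hom b c) (h : hom a b),
      f ⊚ (g ⊚ h) = (f ⊚ g) ⊚ h;
  comp1_idl : forall (a b : ob D) (f : hom a b), id1 b ⊚ f = f;
  comp1_idr : forall (a b : ob D) (f : hom a b), f ⊚ id1 a = f;
  vcompA : forall (a b : ob D) (f g h i : hom a b)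
      (α : cell h i) (β : cell g h) (γ : cell f g), α ⋆ (β ⋆ γ) = (α ⋆ β) ⋆ γ;
  vcomp_idl : forall (a b : ob D) (f g : hom a b) (α : cell f g), id2 g ⋆ α = α;
  vcomp_idr : forall (a b : ob D) (f g : hom a b) (α : cell f g), α ⋆ id2 f = α;
  hcomp_id : forall (a b c : ob D) (f : hom b c) (g : hom a b),
      hcomp (id2 f) (id2 g) = id2 (f ⊚ g);
  interchange : forall (a b c : ob D) (f f' f'' : hom b c) (g g' g'' : hom a b)
      (α : cell f' f'') (β : cell f f') (γ : cell g' g'') (δ : cell g g'),
      hcomp (α ⋆ β) (γ ⋆ δ) = hcomp α γ ⋆ hcomp β δ;
  hcompA : forall (a b c d : ob D) (f f' : hom c d) (g g' : hom b c) (h h' : hom a b)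
      (α : cell f f') (β : cell g g') (γ : cell h h'),
      tr2 (@cell D a d) (comp1A a b c d f g h) (comp1A a b c d f' g' h')
          (hcomp α (hcomp β γ)) = hcomp (hcomp α β) γ;
  hcomp_idl : forall (a b : ob D) (f f' : hom a b) (α : cell f f'),
      tr2 (@cell D a b) (comp1_idl a b f) (comp1_idl a b f') (hcomp (id2 (id1 b)) α) = α;
  hcomp_idr : forall (a b : ob D) (f f' : hom a b) (α : cell f f'),
      tr2 (@cell D a b) (comp1_idr a b f) (comp1_idr a b f') (hcomp α (id2 (id1 a))) = α }.

Record TwoCat := { tc_data :> TwoCatData; tc_ax : IsTwoCat tc_data }.

Section Whiskering.
Context {K : TwoCat}.

Definition c1A {a b c d : ob K} (f : hom c d) (g : hom b c) (h : hom a b) :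
  f ⊚ (g ⊚ h) = (f ⊚ g) ⊚ h := comp1A _ (tc_ax K) a b c d f g h.
Definition c1l {a b : ob K} (f : hom a b) : id1 b ⊚ f = f := comp1_idl _ (tc_ax K) a b f.
Definition c1r {a b : ob K} (f : hom a b) : f ⊚ id1 a = f := comp1_idr _ (tc_ax K) a b f.

Definition lw {a b d : ob K} (f : hom b d) {g h : hom a b} (α : cell g h)
  : cell (f ⊚ g) (f ⊚ h) := hcomp (id2 f) α.
Definition rw {a b d : ob K} {g h : hom b d} (α : cell g h) (f : hom a b)
  : cell (g ⊚ f) (h ⊚ f) := hcomp α (id2 f).

Definition rwA {a b d e : ob K} {f f' : hom d e} {g g' : hom b d}
  (α : cell (f ⊚ g) (f' ⊚ g')) (h : hom a b) : cell (f ⊚ (g ⊚ h)) (f' ⊚ (g' ⊚ h)) :=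
  tr2 cell (eq_sym (c1A f g h)) (eq_sym (c1A f' g' h)) (rw α h).
Definition rwAs {a b d e : ob K} {f : hom d e} {g : hom b d} {x : hom b e}
  (α : cell (f ⊚ g) x) (h : hom a b) : cell (f ⊚ (g ⊚ h)) (x ⊚ h) :=
  tr2 cell (eq_sym (c1A f g h)) eq_refl (rw α h).
Definition rwAt {a b d e : ob K} {f : hom d e} {g : hom b d} {x : hom b e}
  (α : cell x (f ⊚ g)) (h : hom a b) : cell (x ⊚ h) (f ⊚ (g ⊚ h)) :=
  tr2 cell eq_refl (eq_sym (c1A f g h)) (rw α h).
Definition rwIs {a b : ob K} {x : hom b b} (α : cell (id1 b) x) (h : hom a b)
  : cell h (x ⊚ h) := tr2 cell (c1l h) eq_refl (rw α h).
Definition rwIt {a b : ob K} {x : hom b b} (α : cell x (id1 b)) (h : hom a b)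
  : cell (x ⊚ h) h := tr2 cell eq_refl (c1l h) (rw α h).
Definition lwIs {a b : ob K} (f : hom a b) {x : hom a a} (α : cell (id1 a) x)
  : cell f (f ⊚ x) := tr2 cell (c1r f) eq_refl (lw f α).
Definition lwIt {a b : ob K} (f : hom a b) {x : hom a a} (α : cell x (id1 a))
  : cell (f ⊚ x) f := tr2 cell eq_refl (c1r f) (lw f α).

Definition is_monad {k : ob K} (t : hom k k) (mu : cell (t ⊚ t) t) (eta : cell (id1 k) t)
  : Prop :=
  mu ⋆ rwAs mu t = mu ⋆ lw t mu /\
  mu ⋆ rwIs eta t = id2 t /\ mu ⋆ lwIs t eta = id2 t.

Definition is_comonad {k : ob K} (c : hom k k) (delta : cell c (c ⊚ c))
  (eps : cell c (id1 k)) : Prop :=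
  rwAt delta c ⋆ delta = lw c delta ⋆ delta /\
  rwIt eps c ⋆ delta = id2 c /\ lwIt c eps ⋆ delta = id2 c.

(** Algebras / coalgebras with domain X (= 1-cells (X,1) -> (k,t) of the
    Lack–Street 2-category of monads, resp. comonads) and their morphisms
    (= 2-cells there). *)
Definition is_alg {k X : ob K} (t : hom k k) (mu : cell (t ⊚ t) t) (eta : cell (id1 k) t)
  (V : hom X k) (a : cell (t ⊚ V) V) : Prop :=
  a ⋆ rwIs eta V = id2 V /\ a ⋆ rwAs mu V = a ⋆ lw t a.

Definition is_alg_mor {k X : ob K} (t : hom k k) (V W : hom X k)
  (a : cell (t ⊚ V) V) (b : cell (t ⊚ W) W) (ω : cell V W) : Prop :=
  ω ⋆ a = b ⋆ lw t ω.

Definition is_coalg {k X : ob K} (c : hom k k) (delta : cell c (c ⊚ c))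
  (eps : cell c (id1 k)) (V : hom X k) (g : cell V (c ⊚ V)) : Prop :=
  rwIt eps V ⋆ g = id2 V /\ rwAt delta V ⋆ g = lw c g ⋆ g.

Definition is_coalg_mor {k X : ob K} (c : hom k k) (V W : hom X k)
  (g : cell V (c ⊚ V)) (g' : cell W (c ⊚ W)) (ω : cell V W) : Prop :=
  g' ⋆ ω = lw c ω ⋆ g.

(** (E, U, u) is an Eilenberg–Moore object of the monad t: for every X,
    the comparison  K(X,E) -> Alg_t(X),  F |-> (U F, u F),  θ |-> U θ,
    is an isomorphism of categories (bijective on objects, fully faithful).
    This is the pointwise form of the existence of the right 2-adjoint. *)
Definition EM_object_monad {k : ob K} (t : hom k k) (mu : cell (t ⊚ t) t)
  (eta : cell (id1 k) t) (E : ob K) (U : hom E k) (u : cell (t ⊚ U) U) : Prop :=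
  is_alg t mu eta U u /\
  forall X : ob K,
    (forall (V : hom X k) (a : cell (t ⊚ V) V), is_alg t mu eta V a ->
       exists! F : hom X E,
         existT (fun W : hom X k => cell (t ⊚ W) W) (U ⊚ F) (rwAs u F)
         = existT (fun W : hom X k => cell (t ⊚ W) W) V a) /\
    (forall F G : hom X E,
       (forall θ θ' : cell F G, lw U θ = lw U θ' -> θ = θ') /\
       (forall ω : cell (U ⊚ F) (U ⊚ G),
          is_alg_mor t (U ⊚ F) (U ⊚ G) (rwAs u F) (rwAs u G) ω ->
          exists θ : cell F G, lw U θ = ω)).

Definition EM_object_comonad {k : ob K} (c : hom k k) (delta : cell c (c ⊚ c))
  (eps : cell c (id1 k)) (E : ob K) (U : hom E k) (u : cell U (c ⊚ U)) : Prop :=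
  is_coalg c delta eps U u /\
  forall X : ob K,
    (forall (V : hom X k) (g : cell V (c ⊚ V)), is_coalg c delta eps V g ->
       exists! F : hom X E,
         existT (fun W : hom X k => cell W (c ⊚ W)) (U ⊚ F) (rwAt u F)
         = existT (fun W : hom X k => cell W (c ⊚ W)) V g) /\
    (forall F G : hom X E,
       (forall θ θ' : cell F G, lw U θ = lw U θ' -> θ = θ') /\
       (forall ω : cell (U ⊚ F) (U ⊚ G),
          is_coalg_mor c (U ⊚ F) (U ⊚ G) (rwAt u F) (rwAt u G) ω ->
          exists θ : cell F G, lw U θ = ω)).
End Whiskering.

Definition admits_EM_monads (K : TwoCat) : Prop :=
  forall (k : ob K) (t : hom k k) (mu : cell (t ⊚ t) t) (eta : cell (id1 k) t),
    is_monad t mu eta ->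
    exists (E : ob K) (U : hom E k) (u : cell (t ⊚ U) U), EM_object_monad t mu eta E U u.

Definition admits_EM_comonads (K : TwoCat) : Prop :=
  forall (k : ob K) (c : hom k k) (delta : cell c (c ⊚ c)) (eps : cell c (id1 k)),
    is_comonad c delta eps ->
    exists (E : ob K) (U : hom E k) (u : cell U (c ⊚ U)),
      EM_object_comonad c delta eps E U u.

Definition idempotent_2cells_split (K : TwoCat) : Prop :=
  forall (a b : ob K) (f : hom a b) (e : cell f f), e ⋆ e = e ->
    exists (g : hom a b) (i : cell g f) (p : cell f g), i ⋆ p = e /\ p ⋆ i = id2 g.

Section Entwining.
Context {K : TwoCat} {k : ob K} (t c : hom k k) (mu : cell (t ⊚ t) t)
  (eta : cell (id1 k) t) (delta : cell c (c ⊚ c)) (eps : cell c (id1 k))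
  (psi : cell (t ⊚ c) (c ⊚ t)).

Definition weak_entwining : Prop :=
  psi ⋆ rwAs mu c = lw c mu ⋆ rwA psi t ⋆ lw t psi /\
  rwAt delta t ⋆ psi = lw c psi ⋆ rwA psi c ⋆ lw t delta /\
  psi ⋆ rwIs eta c = lw c (rwIt eps t) ⋆ lw c psi ⋆ lw c (rwIs eta c) ⋆ delta /\
  rwIt eps t ⋆ psi = mu ⋆ lw t (rwIt eps t) ⋆ lw t psi ⋆ lw t (rwIs eta c).

Definition weak_iota_lifting : Prop :=
  lw c mu ⋆ rwA psi t ⋆ lw t psi = psi ⋆ rwAs mu c /\
  rwAt delta t ⋆ psi =
    lw c (lw c mu) ⋆ lw c (rwA psi t) ⋆ rwA psi (c ⊚ t) ⋆ lw t (rwAt delta t)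
    ⋆ lw t psi ⋆ lw t (rwIs eta c) /\
  rwIt eps t ⋆ psi = mu ⋆ lw t (rwIt eps t) ⋆ lw t psi ⋆ lw t (rwIs eta c).

Definition weak_pi_lifting : Prop :=
  rwAt delta t ⋆ psi = lw c psi ⋆ rwA psi c ⋆ lw t delta /\
  psi ⋆ rwAs mu c =
    lw c (rwIt eps t) ⋆ lw c psi ⋆ lw c (rwAs mu c) ⋆ rwA psi (t ⊚ c)
    ⋆ lw t (rwA psi c) ⋆ lw t (lw t delta) /\
  psi ⋆ rwIs eta c = lw c (rwIt eps t) ⋆ lw c psi ⋆ lw c (rwIs eta c) ⋆ delta.
End Entwining.

(** The implication (ii) ⇒ (i) only forgets axioms.  For (i) ⇒ (ii) it remains to
    derive the δ-axiom of (A) and the μ-axiom of (B) from the four entwining axioms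
    and the unit laws, by string-diagram calculations.  For (A):
      ccμ ∗ cψt ∗ ψct ∗ t(δt ∗ ψ) ∗ tηc
        = ccμ ∗ cψt ∗ ψct ∗ tcψ ∗ tψc ∗ ttδ ∗ tηc         (δ-axiom)
        = c(cμ ∗ ψt ∗ tψ) ∗ ψtc ∗ tψc ∗ tηcc ∗ tδ         (interchange)
        = cψ ∗ (cμ ∗ ψt ∗ tψ)c ∗ tηcc ∗ tδ                (μ-axiom)
        = cψ ∗ ψc ∗ (μ ∗ tη)cc ∗ tδ = δt ∗ ψ               (μ-axiom, unit, δ-axiom);
    (B) is analogous, with the counit law of c in place of the unit law of t.
    To compute with whiskerings despite the merely propositional associativity of
    1-cell composition, composites of endo-1-cells of k are represented by words,
    evaluated right-nested; on concrete words all boundaries then agree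
    definitionally, and general coherence facts are stated up to transport of
    the boundaries ([≃]). *)

From Stdlib Require Import List ProofIrrelevance ssreflect.
Import ListNotations.

Section TwoCategoryLaws.
Context {K : TwoCat}.

Lemma vcomp_assoc {a b : ob K} {f g h i : hom a b} (α : cell h i) (β : cell g h)
  (γ : cell f g) : α ⋆ (β ⋆ γ) = (α ⋆ β) ⋆ γ.
Proof. exact: (vcompA _ (tc_ax K)). Qed.

Lemma vcomp_id2l {a b : ob K} {f g : hom a b} (α : cell f g) : id2 g ⋆ α = α.
Proof. exact: (vcomp_idl _ (tc_ax K)). Qed.

Lemma vcomp_id2r {a b : ob K} {f g : hom a b} (α : cell f g) : α ⋆ id2 f = α.
Proof. exact: (vcomp_idr _ (tc_ax K)). Qed.

Lemma hcomp_id2 {a b c : ob K} (f : hom b c) (g : hom a b) :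
  hcomp (id2 f) (id2 g) = id2 (f ⊚ g).
Proof. exact: (hcomp_id _ (tc_ax K)). Qed.

Lemma hcomp_vcomp {a b c : ob K} {f f' f'' : hom b c} {g g' g'' : hom a b}
  (α : cell f' f'') (β : cell f f') (γ : cell g' g'') (δ : cell g g') :
  hcomp (α ⋆ β) (γ ⋆ δ) = hcomp α γ ⋆ hcomp β δ.
Proof. exact: (interchange _ (tc_ax K)). Qed.

Lemma eq_precomp2 {a b : ob K} {e f g h : hom a b} {x : cell g h} {y : cell f g}
  {z : cell f h} {R : cell e f} : x ⋆ y = z -> x ⋆ (y ⋆ R) = z ⋆ R.
Proof. by move=> <-; rewrite vcomp_assoc. Qed.

Lemma eq_precomp3 {a b : ob K} {e f g h i : hom a b} {x : cell h i} {y : cell g h}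
  {w : cell f g} {z : cell f i} {R : cell e f} :
  x ⋆ (y ⋆ w) = z -> x ⋆ (y ⋆ (w ⋆ R)) = z ⋆ R.
Proof. by move=> <-; rewrite !vcomp_assoc. Qed.

End TwoCategoryLaws.

Definition cell_heq {K : TwoCat} {a b : ob K} {f g f' g' : hom a b}
  (x : cell f g) (y : cell f' g') : Prop :=
  exists (ef : f = f') (eg : g = g'), tr2 cell ef eg x = y.

Notation "x ≃ y" := (cell_heq x y) (at level 70).

Section HeterogeneousEquality.
Context {K : TwoCat}.

Lemma heq_eq {a b : ob K} {f g : hom a b} {x y : cell f g} : x ≃ y -> x = y.
Proof.
move=> [ef [eg <-]].
by rewrite (proof_irrelevance _ ef eq_refl) (proof_irrelevance _ eg eq_refl).
Qed.

Lemma heq_refl {a b : ob K} {f g : hom a b} (x : cell f g) : x ≃ x.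
Proof. by exists eq_refl, eq_refl. Qed.

Lemma heq_sym {a b : ob K} {f g f' g' : hom a b} {x : cell f g} {y : cell f' g'} :
  x ≃ y -> y ≃ x.
Proof. by move=> [ef [eg <-]] {y}; case: f' / ef; case: g' / eg; apply: heq_refl. Qed.

Lemma heq_trans {a b : ob K} {f g f' g' f'' g'' : hom a b}
  {x : cell f g} {y : cell f' g'} {z : cell f'' g''} : x ≃ y -> y ≃ z -> x ≃ z.
Proof. by move=> [ef [eg <-]] {y}; case: f' / ef; case: g' / eg. Qed.

Lemma tr2_heq {a b : ob K} {f g f' g' : hom a b} (ef : f = f') (eg : g = g')
  (x : cell f g) : tr2 cell ef eg x ≃ x.
Proof. by apply: heq_sym; exists ef, eg. Qed.

Lemma id2_heq {a b : ob K} {f f' : hom a b} : f = f' -> id2 f ≃ id2 f'.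
Proof. by case: f' /; apply: heq_refl. Qed.

Lemma heq_vcomp {a b : ob K} {f g h f' g' h' : hom a b}
  {x : cell g h} {y : cell f g} {x' : cell g' h'} {y' : cell f' g'} :
  x ≃ x' -> y ≃ y' -> x ⋆ y ≃ x' ⋆ y'.
Proof.
move=> [eg [eh <-]] [ef [eg' <-]] {x' y'}.
case: g' / eg eg'; case: h' / eh; case: f' / ef => eg'.
by rewrite (proof_irrelevance _ eg' eq_refl); apply: heq_refl.
Qed.

Lemma heq_hcomp {a b c : ob K} {f f' F F' : hom b c} {g g' G G' : hom a b}
  {α : cell f f'} {β : cell g g'} {α' : cell F F'} {β' : cell G G'} :
  α ≃ α' -> β ≃ β' -> hcomp α β ≃ hcomp α' β'.
Proof.
move=> [e1 [e2 <-]] [e3 [e4 <-]] {α' β'}.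
by case: F / e1; case: F' / e2; case: G / e3; case: G' / e4; apply: heq_refl.
Qed.

Lemma hcompA_heq {a b c d : ob K} {f f' : hom c d} {g g' : hom b c} {h h' : hom a b}
  (α : cell f f') (β : cell g g') (γ : cell h h') :
  hcomp α (hcomp β γ) ≃ hcomp (hcomp α β) γ.
Proof. by rewrite -(hcompA _ (tc_ax K)); apply: heq_sym; apply: tr2_heq. Qed.

Lemma hcomp_id1l_heq {a b : ob K} {f f' : hom a b} (α : cell f f') :
  hcomp (id2 (id1 b)) α ≃ α.
Proof.
by rewrite -{2}(hcomp_idl _ (tc_ax K) _ _ _ _ α); apply: heq_sym; apply: tr2_heq.
Qed.

Lemma hcomp_id1r_heq {a b : ob K} {f f' : hom a b} (α : cell f f') :
  hcomp α (id2 (id1 a)) ≃ α.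
Proof.
by rewrite -{2}(hcomp_idr _ (tc_ax K) _ _ _ _ α); apply: heq_sym; apply: tr2_heq.
Qed.

End HeterogeneousEquality.

Section Words.
Context {K : TwoCat} {k : ob K}.
Implicit Types u v w L r m : list (hom k k).

(* Singletons evaluate to themselves, so that e.g. [eval_word [t; c]] is [t ⊚ c]. *)
Fixpoint eval_word w : hom k k :=
  match w with
  | [] => id1 k
  | [x] => x
  | x :: w' => x ⊚ eval_word w'
  end.

Local Notation idw w := (id2 (eval_word w)).

Lemma eval_word_cat u v : eval_word (u ++ v) = eval_word u ⊚ eval_word v.
Proof.
elim: u => [|x u IH]; first by rewrite c1l.
case: u IH => [|y u] IH.
  by case: v {IH} => [|z v] //; rewrite c1r.
by rewrite -[LHS]/(x ⊚ eval_word ((y :: u) ++ v)) IH c1A.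
Qed.

Lemma id2_cat_heq u v : idw (u ++ v) ≃ hcomp (idw u) (idw v).
Proof. by rewrite hcomp_id2; apply: id2_heq; apply: eval_word_cat. Qed.

Lemma eval_word_whisker L u r :
  eval_word (rev L) ⊚ (eval_word u ⊚ eval_word r) = eval_word (rev_append L (u ++ r)).
Proof. by rewrite rev_append_rev !eval_word_cat. Qed.

(* The left context [L] is stored reversed: then [whisker L r] and, e.g.,
   [whisker (c :: L) r] compose without transport even for abstract [L] and [r]. *)
Definition whisker L r {u v} (α : cell (eval_word u) (eval_word v)) :
  cell (eval_word (rev_append L (u ++ r))) (eval_word (rev_append L (v ++ r))) :=
  tr2 cell (eval_word_whisker L u r) (eval_word_whisker L v r)
    (hcomp (idw (rev L)) (hcomp α (idw r))).

Lemma whisker_heq L r {u v} (α : cell (eval_word u) (eval_word v)) :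
  whisker L r α ≃ hcomp (idw (rev L)) (hcomp α (idw r)).
Proof. exact: tr2_heq. Qed.

Lemma whisker_vcomp L r {u v w} (α : cell (eval_word v) (eval_word w))
  (β : cell (eval_word u) (eval_word v)) :
  whisker L r (α ⋆ β) = whisker L r α ⋆ whisker L r β.
Proof.
apply: heq_eq; apply: heq_trans (whisker_heq L r _) _.
apply: heq_sym; apply: heq_trans (heq_vcomp (whisker_heq L r α) (whisker_heq L r β)) _.
by rewrite -!hcomp_vcomp !vcomp_id2l; apply: heq_refl.
Qed.

Lemma whisker_id2 L r u : whisker L r (idw u) = id2 _.
Proof.
apply: heq_eq; apply: heq_trans (whisker_heq _ _ _) _.
by rewrite !hcomp_id2; apply: id2_heq; apply: eval_word_whisker.
Qed.

Lemma whisker_whisker L r L' r' {u v} (α : cell (eval_word u) (eval_word v)) :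
  whisker L r (whisker L' r' α) ≃ whisker (L' ++ L) (r' ++ r) α.
Proof.
apply: (heq_trans
  (y := hcomp (hcomp (idw (rev L)) (idw (rev L'))) (hcomp α (hcomp (idw r') (idw r))))).
  apply: heq_trans (whisker_heq L r _) _.
  apply: heq_trans (heq_hcomp (heq_refl _) (heq_hcomp (whisker_heq L' r' α) (heq_refl _))) _.
  apply: heq_trans (heq_hcomp (heq_refl _) (heq_sym (hcompA_heq _ _ _))) _.
  apply: heq_trans
    (heq_hcomp (heq_refl _) (heq_hcomp (heq_refl _) (heq_sym (hcompA_heq _ _ _)))) _.
  exact: hcompA_heq.
apply: heq_sym; apply: heq_trans (whisker_heq _ _ _) _; rewrite rev_app_distr.
exact: heq_hcomp (id2_cat_heq _ _) (heq_hcomp (heq_refl α) (id2_cat_heq _ _)).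
Qed.

Lemma lw_whisker (f : hom k k) {u v} (α : cell (eval_word u) (eval_word v)) :
  lw f α ≃ whisker [f] [] α.
Proof.
apply: heq_sym; apply: heq_trans (whisker_heq _ _ _) _.
exact: heq_hcomp (heq_refl _) (hcomp_id1r_heq α).
Qed.

Lemma rw_whisker w {u v} (α : cell (eval_word u) (eval_word v)) :
  rw α (eval_word w) ≃ whisker [] w α.
Proof.
by apply: heq_sym; apply: heq_trans (whisker_heq [] w α) _; apply: hcomp_id1l_heq.
Qed.

Lemma tr2_lw_whisker (x : hom k k) {u v} (α : cell (eval_word u) (eval_word v)) {f g}
  (ef : _ = f) (eg : _ = g) : tr2 cell ef eg (lw x α) ≃ whisker [x] [] α.
Proof. exact: heq_trans (tr2_heq _ _ _) (lw_whisker _ _). Qed.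

Lemma tr2_rw_whisker w {u v} (α : cell (eval_word u) (eval_word v)) {f g}
  (ef : _ = f) (eg : _ = g) : tr2 cell ef eg (rw α (eval_word w)) ≃ whisker [] w α.
Proof. exact: heq_trans (tr2_heq _ _ _) (rw_whisker _ _). Qed.

Lemma whisker_right_heq L m w r {u v} (α : cell (eval_word u) (eval_word v)) :
  whisker L (m ++ w ++ r) α
  ≃ hcomp (idw (rev L)) (hcomp α (hcomp (idw m) (hcomp (idw w) (idw r)))).
Proof.
apply: heq_trans (whisker_heq _ _ _) _.
apply: heq_hcomp (heq_refl _) (heq_hcomp (heq_refl _) _).
exact: heq_trans (id2_cat_heq _ _) (heq_hcomp (heq_refl _) (id2_cat_heq _ _)).
Qed.

Lemma whisker_left_heq L w m r {u v} (β : cell (eval_word u) (eval_word v)) :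
  whisker (rev_append m (rev_append w L)) r β
  ≃ hcomp (idw (rev L)) (hcomp (idw w) (hcomp (idw m) (hcomp β (idw r)))).
Proof.
apply: heq_trans (whisker_heq _ _ _) _.
have -> : rev (rev_append m (rev_append w L)) = rev L ++ w ++ m.
  by rewrite !rev_append_rev !rev_app_distr !rev_involutive app_assoc.
apply: heq_trans (heq_hcomp (heq_trans (id2_cat_heq _ _)
  (heq_hcomp (heq_refl _) (id2_cat_heq _ _))) (heq_refl _)) _.
apply: heq_trans (heq_sym (hcompA_heq _ _ _)) _.
exact: heq_hcomp (heq_refl _) (heq_sym (hcompA_heq _ _ _)).
Qed.

(* Both composites below are well typed only for concrete words, so the lemma is
   phrased for arbitrary cells [≃]-equal to the two whiskerings. *)
Lemma whisker_interchange L m r {u u' v v'} (α : cell (eval_word u) (eval_word u'))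
  (β : cell (eval_word v) (eval_word v')) {X Y Z X' Y' Z' : hom k k}
  (x : cell Y Z) (y : cell X Y) (x' : cell Y' Z') (y' : cell X' Y') :
  x ≃ whisker L (m ++ v' ++ r) α -> y ≃ whisker (rev_append m (rev_append u L)) r β ->
  x' ≃ whisker (rev_append m (rev_append u' L)) r β -> y' ≃ whisker L (m ++ v ++ r) α ->
  x ⋆ y ≃ x' ⋆ y'.
Proof.
move=> hx hy hx' hy'.
apply: heq_trans (heq_vcomp (heq_trans hx (whisker_right_heq _ _ _ _ _))
                            (heq_trans hy (whisker_left_heq _ _ _ _ _))) _.
apply: heq_sym.
apply: heq_trans (heq_vcomp (heq_trans hx' (whisker_left_heq _ _ _ _ _))
                            (heq_trans hy' (whisker_right_heq _ _ _ _ _))) _.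
by rewrite -!hcomp_vcomp !vcomp_id2l !vcomp_id2r; apply: heq_refl.
Qed.

End Words.

Ltac word_of h :=
  lazymatch h with
  | ?x ⊚ ?y => let w := word_of y in constr:(x :: w)
  | _ => constr:([h])
  end.

Ltac whisker_normal :=
  unfold rwA, rwAs, rwAt, rwIs, rwIt, lwIs, lwIt;
  repeat match goal with
  | |- context [tr2 _ ?ef ?eg (rw ?α ?h)] =>
      let w := word_of h in rewrite (heq_eq (tr2_rw_whisker w α ef eg))
  | |- context [tr2 _ ?ef ?eg (lw ?x ?α)] => rewrite (heq_eq (tr2_lw_whisker x α ef eg))
  | |- context [lw ?x ?α] => rewrite (heq_eq (lw_whisker x α))
  | |- context [whisker ?L ?r (whisker ?L' ?r' ?α)] =>
      rewrite (heq_eq (whisker_whisker L r L' r' α))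
  end;
  cbn [app rev_append].

Ltac rewrite_chain E :=
  first [ rewrite (eq_precomp3 E) | rewrite (eq_precomp2 E) | rewrite E ];
  rewrite -?vcomp_assoc.

Section WeakEntwining.
(* Word-typed versions of the data; [eval_word [t; t]] is [t ⊚ t] by conversion. *)
Context {K : TwoCat} {k : ob K} (t c : hom k k)
  (mu : cell (eval_word [t; t]) (eval_word [t])) (eta : cell (eval_word []) (eval_word [t]))
  (delta : cell (eval_word [c]) (eval_word [c; c])) (eps : cell (eval_word [c]) (eval_word []))
  (psi : cell (eval_word [t; c]) (eval_word [c; t])).

Hypothesis psi_mu : psi ⋆ rwAs mu c = lw c mu ⋆ rwA psi t ⋆ lw t psi.
Hypothesis psi_delta : rwAt delta t ⋆ psi = lw c psi ⋆ rwA psi c ⋆ lw t delta.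
Hypothesis mu_etar : mu ⋆ lwIs t eta = id2 t.
Hypothesis epsr_delta : lwIt c eps ⋆ delta = id2 c.

Lemma psi_delta_words :
  whisker [] [t] delta ⋆ psi = whisker [c] [] psi ⋆ whisker [] [c] psi ⋆ whisker [t] [] delta.
Proof. by move: psi_delta; whisker_normal; exact: id. Qed.

Lemma psi_delta_whisker L r :
  whisker L (t :: r) delta ⋆ whisker L r psi =
  whisker (c :: L) r psi ⋆ whisker L (c :: r) psi ⋆ whisker (t :: L) r delta.
Proof.
by move: (f_equal (whisker L r) psi_delta_words); rewrite !whisker_vcomp; whisker_normal.
Qed.

Lemma psi_mu_whisker L r :
  whisker L r psi ⋆ whisker L (c :: r) mu =
  whisker (c :: L) r mu ⋆ whisker L (t :: r) psi ⋆ whisker (t :: L) r psi.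
Proof.
have words :
    psi ⋆ whisker [] [c] mu = whisker [c] [] mu ⋆ whisker [] [t] psi ⋆ whisker [t] [] psi.
  by move: psi_mu; whisker_normal; exact: id.
by move: (f_equal (whisker L r) words); rewrite !whisker_vcomp; whisker_normal.
Qed.

Lemma mu_etar_whisker L r : whisker L r mu ⋆ whisker (t :: L) r eta = id2 _.
Proof.
have words : mu ⋆ whisker [t] [] eta = id2 (eval_word [t]).
  by move: mu_etar; whisker_normal; exact: id.
by move: (f_equal (whisker L r) words); rewrite whisker_vcomp whisker_id2; whisker_normal.
Qed.

Lemma epsr_delta_whisker L r : whisker (c :: L) r eps ⋆ whisker L r delta = id2 _.
Proof.
have words : whisker [c] [] eps ⋆ delta = id2 (eval_word [c]).
  by move: epsr_delta; whisker_normal; exact: id.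
by move: (f_equal (whisker L r) words); rewrite whisker_vcomp whisker_id2; whisker_normal.
Qed.

Lemma psi_psi_interchange L r :
  whisker L (c :: t :: r) psi ⋆ whisker (c :: t :: L) r psi =
  whisker (t :: c :: L) r psi ⋆ whisker L (t :: c :: r) psi.
Proof. by apply: heq_eq; apply: (whisker_interchange L [] r psi psi); apply: heq_refl. Qed.

Lemma eta_delta_interchange L r :
  whisker L (c :: c :: r) eta ⋆ whisker L r delta =
  whisker (t :: L) r delta ⋆ whisker L (c :: r) eta.
Proof. by apply: heq_eq; apply: (whisker_interchange L [] r eta delta); apply: heq_refl. Qed.

Lemma mu_delta_interchange L r :
  whisker L (c :: c :: r) mu ⋆ whisker (t :: t :: L) r delta =
  whisker (t :: L) r delta ⋆ whisker L (c :: r) mu.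
Proof. by apply: heq_eq; apply: (whisker_interchange L [] r mu delta); apply: heq_refl. Qed.

Lemma iota_lifting_delta :
  rwAt delta t ⋆ psi =
    lw c (lw c mu) ⋆ lw c (rwA psi t) ⋆ rwA psi (c ⊚ t) ⋆ lw t (rwAt delta t)
    ⋆ lw t psi ⋆ lw t (rwIs eta c).
Proof.
whisker_normal.
rewrite_chain (psi_delta_whisker [t] []).
rewrite_chain (psi_psi_interchange [] []).
rewrite_chain (eq_sym (eta_delta_interchange [t] [])).
rewrite_chain (eq_sym (psi_mu_whisker [c] [])).
rewrite_chain (eq_sym (psi_mu_whisker [] [c])).
rewrite_chain (mu_etar_whisker [] [c; c]).
by rewrite vcomp_id2l psi_delta_words.
Qed.

Lemma pi_lifting_mu :
  psi ⋆ rwAs mu c =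
    lw c (rwIt eps t) ⋆ lw c psi ⋆ lw c (rwAs mu c) ⋆ rwA psi (t ⊚ c)
    ⋆ lw t (rwA psi c) ⋆ lw t (lw t delta).
Proof.
whisker_normal.
rewrite_chain (eq_sym (psi_mu_whisker [] [c])).
rewrite_chain (mu_delta_interchange [] []).
rewrite_chain (eq_sym psi_delta_words).
rewrite_chain (epsr_delta_whisker [] [t]).
by rewrite vcomp_id2l.
Qed.

End WeakEntwining.

Section Liftings.
Context {K : TwoCat} {k : ob K} (t c : hom k k) (mu : cell (t ⊚ t) t) (eta : cell (id1 k) t)
  (delta : cell c (c ⊚ c)) (eps : cell c (id1 k)) (psi : cell (t ⊚ c) (c ⊚ t)).

Lemma weak_entwining_iota_lifting :
  is_monad t mu eta -> weak_entwining t c mu eta delta eps psi ->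
  weak_iota_lifting t c mu eta delta eps psi.
Proof.
move=> [_ [_ mu_etar]] [psi_mu [psi_delta [_ eps_psi]]].
by split; [|split]; [rewrite psi_mu | apply: iota_lifting_delta | ].
Qed.

Lemma weak_entwining_pi_lifting :
  is_comonad c delta eps -> weak_entwining t c mu eta delta eps psi ->
  weak_pi_lifting t c mu eta delta eps psi.
Proof.
move=> [_ [_ epsr_delta]] [psi_mu [psi_delta [psi_eta _]]].
by split; [|split]; [ | apply: pi_lifting_mu | ].
Qed.

Lemma weak_liftings_entwining :
  weak_iota_lifting t c mu eta delta eps psi -> weak_pi_lifting t c mu eta delta eps psi ->
  weak_entwining t c mu eta delta eps psi.
Proof. by move=> [mu_psi [_ eps_psi]] [psi_delta [_ psi_eta]]; split; [apply: eq_sym |]. Qed.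

End Liftings.

(* The Eilenberg–Moore and splitting hypotheses only serve to interpret (A) and (B)
   as liftings; the equivalence itself is purely equational. *)
Theorem proposition5p7 (K : TwoCat)
  (HEMm : admits_EM_monads K) (HEMc : admits_EM_comonads K)
  (Hsplit : idempotent_2cells_split K)
  (k : ob K) (t : hom k k) (mu : cell (t ⊚ t) t) (eta : cell (id1 k) t)
  (Ht : is_monad t mu eta)
  (c : hom k k) (delta : cell c (c ⊚ c)) (eps : cell c (id1 k))
  (Hc : is_comonad c delta eps)
  (psi : cell (t ⊚ c) (c ⊚ t)) :
  weak_entwining t c mu eta delta eps psi <->
  (weak_iota_lifting t c mu eta delta eps psi /\
   weak_pi_lifting t c mu eta delta eps psi).
Proof.
split.
- by move=> E; split; [apply: weak_entwining_iota_lifting | apply: weak_entwining_pi_lifting].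
- by move=> [iota pi]; apply: weak_liftings_entwining.
Qed.
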